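(* Let $\Bbbk$ be an algebraically closed field of characteristic zero, $G$ a finite group, $\chi:G\to\Bbbk^\times$ a linear character, $g\in Z(G)$, $n\geq 2$ the multiplicative order of $\chi(g)$, and $H$ the $\Bbbk$-algebra generated by $\Bbbk G$ and $z$ with relations $z^n=0$, $zs=\chi(s)sz$ ($s\in G$). Then for any nonzero $h_0,h_1,\dots,h_{n-1}\in\Bbbk G$, the ideals $(h_0),(zh_1),\dots,(z^{n-1}h_{n-1})$ are pairwise distinct.
   Context: $(a)$ denotes the two-sided ideal of $H$ generated by $a$. *)

From HB Require Import structures.
From mathcomp Require Import all_boot all_order all_algebra all_fingroup all_solvable.
Set Implicit Arguments. Unset Strict Implicit. Unset Printing Implicit Defensive.
Import GRing.Theory.
Local Open Scope ring_scope.

(* The algebra H = k<kG, z | z^n = 0, z s = chi(s) s z> is realised on its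
   standard basis { z^i s : i < n, s in G }: an element of H is the
   coefficient function 'I_n * G -> K, i.e. h = \sum_(i,s) h(i,s) z^i s. *)
Definition Halg (K : fieldType) (gT : finGroupType) (n : nat) :=
  {ffun 'I_n * gT -> K}.

(* Product: (z^i s)(z^j t) = chi(s)^{-j} z^(i+j) (s t), and 0 if i+j >= n
   (since s z = chi(s)^{-1} z s). *)
Definition Hmul (K : fieldType) (gT : finGroupType) (n : nat) (chi : gT -> K)
  (a b : Halg K gT n) : Halg K gT n :=
  [ffun p : 'I_n * gT =>
     \sum_(i : 'I_n) \sum_(j : 'I_n | (i + j)%N == val p.1)
       \sum_(s : gT) a (i, s) * b (j, (s^-1 * p.2)%g) * (chi s) ^- j].

Definition zpow_kG (K : fieldType) (gT : finGroupType) (n : nat) (i : 'I_n)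
  (h : {ffun gT -> K}) : Halg K gT n :=
  [ffun p : 'I_n * gT => if p.1 == i then h p.2 else 0].

Definition in_ideal (K : fieldType) (gT : finGroupType) (n : nat)
  (chi : gT -> K) (a x : Halg K gT n) : Prop :=
  exists (m : nat) (u v : 'I_m -> Halg K gT n),
    x = \sum_(k < m) Hmul chi (Hmul chi (u k) a) (v k).

Definition linear_char (K : fieldType) (gT : finGroupType) (chi : gT -> K) :=
  (forall s, chi s != 0) /\ (forall s t : gT, chi (s * t)%g = chi s * chi t).

From HB Require Import structures.
From mathcomp Require Import all_boot all_order all_algebra all_fingroup all_solvable.
Import GRing.Theory.
Set Implicit Arguments.
Unset Strict Implicit.
Unset Printing Implicit Defensive.
Local Open Scope ring_scope.

(* The z-degree filtration: multiplying by anything never lowers the z-degree,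
   so every element of the ideal (z^j h) has no component of z-degree < j.
   Since z^i h lies in its own ideal and has a nonzero component of degree i,
   it is not in (z^j h') when i < j. *)

Section Filtration.
Variables (K : fieldType) (gT : finGroupType) (n : nat) (chi : gT -> K).

Definition vanish_below (j : nat) (a : Halg K gT n) :=
  forall p : 'I_n * gT, (p.1 < j)%N -> a p = 0.

Lemma vanish_below_mull j u a : vanish_below j a -> vanish_below j (Hmul chi u a).
Proof.
move=> a_j [k t] /= lt_kj; rewrite ffunE.
apply: big1 => i _; apply: big1 => l /eqP kE; apply: big1 => s _.
by rewrite a_j ?mulr0 ?mul0r //= (leq_ltn_trans _ lt_kj) // -kE leq_addl.
Qed.

Lemma vanish_below_mulr j u a : vanish_below j a -> vanish_below j (Hmul chi a u).
Proof.
move=> a_j [k t] /= lt_kj; rewrite ffunE.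
apply: big1 => i _; apply: big1 => l /eqP kE; apply: big1 => s _.
by rewrite a_j ?mulr0 ?mul0r //= (leq_ltn_trans _ lt_kj) // -kE leq_addr.
Qed.

Lemma vanish_below_ideal j a x :
  vanish_below j a -> in_ideal chi a x -> vanish_below j x.
Proof.
move=> a_j [m [u [v ->]]] p lt_pj; rewrite sum_ffunE.
by apply: big1 => k _; rewrite (vanish_below_mulr _ (vanish_below_mull _ a_j)).
Qed.

Lemma zpow_kG_vanish_below (i : 'I_n) h : vanish_below i (zpow_kG i h).
Proof.
move=> [k t] /= lt_ki; rewrite ffunE /=.
by case: eqP => // kE; rewrite kE ltnn in lt_ki.
Qed.

Lemma zpow_kG_vanish_belowN (i : 'I_n) j h :
  h != 0 -> (i < j)%N -> ~ vanish_below j (zpow_kG i h).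
Proof.
move=> /eqP h_neq0 lt_ij zih_j; apply: h_neq0; apply/ffunP => t.
by rewrite ffunE -(zih_j (i, t)) // ffunE /= eqxx.
Qed.

Lemma zpow_kG_notin_ideal (i j : 'I_n) hi hj :
  hi != 0 -> (i < j)%N -> ~ in_ideal chi (zpow_kG j hj) (zpow_kG i hi).
Proof.
move=> hi_neq0 lt_ij zih_in.
apply: (zpow_kG_vanish_belowN hi_neq0 lt_ij).
exact: vanish_below_ideal (zpow_kG_vanish_below hj) zih_in.
Qed.

End Filtration.

Section Unit.
Variables (K : fieldType) (gT : finGroupType) (n : nat) (chi : gT -> K).
Hypothesis chi1 : chi 1%g = 1.

Definition delta1 : {ffun gT -> K} := [ffun s => (s == 1%g)%:R].

Definition Hone : Halg K gT n.+1 := zpow_kG ord0 delta1.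

Lemma Hmul1l a : Hmul chi Hone a = a.
Proof.
apply/ffunP => [[k t]]; rewrite ffunE /=.
rewrite (bigD1 ord0) //= [X in _ + X]big1 ?addr0 => [|i /negbTE i_neq0]; last first.
  by apply: big1 => l _; apply: big1 => s _; rewrite ffunE /= i_neq0 !mul0r.
rewrite (bigD1 k) //= [X in _ + X]big1 ?addr0 => [|l /andP[/eqP lE /eqP]]; last first.
  by case; apply: val_inj.
rewrite (bigD1 1%g) //= [X in _ + X]big1 ?addr0 => [|s /negbTE s_neq1]; last first.
  by rewrite !ffunE /= s_neq1 !mul0r.
by rewrite !ffunE /= !eqxx mul1r invg1 mul1g chi1 expr1n invr1 mulr1.
Qed.

Lemma Hmul1r a : Hmul chi a Hone = a.
Proof.
apply/ffunP => [[k t]]; rewrite ffunE /=.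
rewrite (bigD1 k) //= [X in _ + X]big1 ?addr0 => [|i neq_ik]; last first.
  apply: big1 => l /eqP ilE; apply: big1 => s _; rewrite ffunE /=.
  case: eqP => [l0|]; last by rewrite mulr0 mul0r.
  by move: ilE neq_ik; rewrite l0 addn0 => /val_inj ->; rewrite eqxx.
rewrite (bigD1 ord0) ?addn0 //= [X in _ + X]big1 ?addr0 => [|l /andP[_ /negbTE l_neq0]]; last first.
  by apply: big1 => s _; rewrite ffunE /= l_neq0 mulr0 mul0r.
rewrite (bigD1 t) //= [X in _ + X]big1 ?addr0 => [|s neq_st]; last first.
  by rewrite !ffunE /= -eq_mulVg1 (negbTE neq_st) mulr0 mul0r.
by rewrite !ffunE /= mulVg eqxx expr0 invr1 !mulr1.
Qed.

Lemma in_ideal_self (a : Halg K gT n.+1) : in_ideal chi a a.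
Proof. by exists 1%N, (fun=> Hone), (fun=> Hone); rewrite big_ord1 Hmul1r Hmul1l. Qed.

End Unit.

Theorem lemma3p4 (K : closedFieldType) (gT : finGroupType) (chi : gT -> K)
  (g : gT) (n : nat) :
  [pchar K] =i pred0 ->
  linear_char chi ->
  (g \in 'Z([set: gT]))%g ->
  (2 <= n)%N ->
  n.-primitive_root (chi g) ->
  forall h : 'I_n -> {ffun gT -> K},
    (forall i, h i != 0) ->
    forall i j : 'I_n, i != j ->
      ~ (forall x : Halg K gT n,
           in_ideal chi (zpow_kG i (h i)) x <-> in_ideal chi (zpow_kG j (h j)) x).
Proof.
move=> _ [chi_neq0 chiM] _; case: n => // n _ _ h h_neq0 i j neq_ij same_ideal.
have chi1 : chi 1%g = 1.
  by apply: (mulIf (chi_neq0 1%g)); rewrite mul1r -chiM mulg1.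
case: (ltngtP i j) => [lt_ij | lt_ji | /val_inj eq_ij].
- exact/(zpow_kG_notin_ideal (h_neq0 i) lt_ij)/same_ideal/in_ideal_self.
- exact/(zpow_kG_notin_ideal (h_neq0 j) lt_ji)/same_ideal/in_ideal_self.
- by rewrite eq_ij eqxx in neq_ij.
Qed.
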